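(* Let $P$ be a property that is a necessary condition for the existence of a perfect factor, i.e. for every $(G',f')\in\mathcal C$ such that $G'$ has a perfect $f'$-factor we have $P(G',f')$. Let $\kappa$ be an infinite cardinal and $(G,f)\in\mathcal C$ with $|V(G)|=\kappa^+$. If $G$ possesses a perfect $f$-factor, then $(G,f)$ is not $P$-destructed.
   Context: A graph is $G=(V,E)$ with $V$ a nonempty set and $E\subseteq\{e\subseteq V:|e|=2\}$. For $F\subseteq E$ and $x\in V$, $d_F(x)$ is the cardinal $|\{e\in F:x\in e\}|$. For $f:V\to$ Cardinals, an $f$-factor of $G$ is $F\subseteq E$ with $d_F(x)\le f(x)$ for all $x$; it is perfect if $d_F(x)=f(x)$ for all $x$; $f^{-1}(\lambda)=\{x\in V:f(x)=\lambda\}$. $\mathcal C$ is the class of all pairs $(G,f)$ with $G=(V,E)$ a graph, $f:V\to$ Cardinals, and $f(x)\le d_E(x)$ for all $x\in V$. A property $P$ is a class of pairs; $P(G,f)$ (also ''$(G,f)$ fulfills $P$'') means that $(G,f)\in\mathcal C$ and $(G,f)$ has property $P$. Destructions: let $(G,f)\in\mathcal C$, $G=(V,E)$, $|V|=\kappa^+$ for an infinite cardinal $\kappa$. Let $(A_\alpha)_{\alpha<\kappa^+}$ be an increasing continuous sequence (i.e. $A_\lambda=\bigcup_{\alpha<\lambda}A_\alpha$ for limit $\lambda$) of subsets of $V$ with $|A_\alpha|<\kappa^+$ for all $\alpha$ and $V=\bigcup_{\alpha<\kappa^+}A_\alpha$. For $\alpha<\kappa^+$ put $V_\alpha=(V\setminus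 A_\alpha)\cup f^{-1}(\kappa^+)$, $E_\alpha=\{\{x,y\}\in E: x\in V_\alpha,\ y\in V\setminus A_\alpha\}$, $G_\alpha=(V_\alpha,E_\alpha)$, $f_\alpha=f\restriction V_\alpha$. For a property $P$, $(A_\alpha)_{\alpha<\kappa^+}$ is a $P$-destruction of $(G,f)$ if $S=\{\alpha<\kappa^+: P(G_\alpha,f_\alpha)\text{ fails}\}$ is stationary in $\kappa^+$; $(G,f)$ is $P$-destructed if some such sequence is a $P$-destruction of $(G,f)$. *)

(* plain Rocq, cardinals represented by types. *)

Definition card_le (A B : Type) : Prop :=
  exists g : A -> B, forall a a', g a = g a' -> a = a'.
Definition card_eq (A B : Type) : Prop :=
  exists g : A -> B, (forall a a', g a = g a' -> a = a') /\ (forall b, exists a, g a = b).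
Definition card_lt (A B : Type) : Prop := card_le A B /\ ~ card_le B A.

Definition is_graph (V : Type) (E : V -> V -> Prop) : Prop :=
  inhabited V /\ (forall x y, E x y -> E y x) /\ (forall x, ~ E x x).

(* d_F(x) is the cardinality of the type of F-neighbours of x *)
Definition deg {V : Type} (F : V -> V -> Prop) (x : V) : Type := {y : V | F x y}.

Definition in_C (V : Type) (E : V -> V -> Prop) (f : V -> Type) : Prop :=
  is_graph V E /\ forall x, card_le (f x) (deg E x).

Definition perfect_factor (V : Type) (E : V -> V -> Prop) (f : V -> Type)
  (F : V -> V -> Prop) : Prop :=
  (forall x y, F x y -> E x y) /\ (forall x y, F x y -> F y x) /\
  (forall x, card_eq (deg F x) (f x)).

Definition has_perfect_factor (V : Type) (E : V -> V -> Prop) (f : V -> Type) : Prop :=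
  exists F, perfect_factor V E f F.

Definition property : Type :=
  forall V : Type, (V -> V -> Prop) -> (V -> Type) -> Prop.

(* "P(G,f)": (G,f) in C and has property P *)
Definition fulfills (P : property) (V : Type) (E : V -> V -> Prop) (f : V -> Type) : Prop :=
  in_C V E f /\ P V E f.

Definition is_limit {O : Type} (lt : O -> O -> Prop) (l : O) : Prop :=
  (exists a, lt a l) /\ (forall a, lt a l -> exists b, lt a b /\ lt b l).

(* (O, lt) is a well-order of order type kappa^+, where kappa = |K| is infinite:
   every proper initial segment has cardinality <= kappa, and O itself does not. *)
Definition is_succ_card (K : Type) (O : Type) (lt : O -> O -> Prop) : Prop :=
  card_le nat K /\
  well_founded lt /\
  (forall a b c, lt a b -> lt b c -> lt a c) /\
  (forall a b, lt a b \/ a = b \/ lt b a) /\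
  (forall a, card_le {b : O | lt b a} K) /\
  ~ card_le O K.

Definition club {O : Type} (lt : O -> O -> Prop) (C : O -> Prop) : Prop :=
  (forall a, exists b, C b /\ (lt a b \/ a = b)) /\
  (forall l, is_limit lt l ->
     (forall a, lt a l -> exists b, C b /\ (lt a b \/ a = b) /\ lt b l) -> C l).

Definition stationary {O : Type} (lt : O -> O -> Prop) (S : O -> Prop) : Prop :=
  forall C, club lt C -> exists a, S a /\ C a.

Definition destruction_seq (V : Type) (O : Type) (lt : O -> O -> Prop)
  (A : O -> V -> Prop) : Prop :=
  (forall a b, lt a b -> forall x, A a x -> A b x) /\
  (forall l, is_limit lt l -> forall x, A l x <-> exists a, lt a l /\ A a x) /\
  (forall a, card_lt {x : V | A a x} O) /\
  (forall x, exists a, A a x).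

(* V_alpha = (V \ A_alpha) u f^{-1}(kappa^+) *)
Definition V_al {V : Type} {O : Type} (f : V -> Type) (A : O -> V -> Prop) (a : O)
  (x : V) : Prop := ~ A a x \/ card_eq (f x) O.

Definition Vt_al {V : Type} {O : Type} (f : V -> Type) (A : O -> V -> Prop) (a : O) : Type :=
  {x : V | V_al f A a x}.

(* E_alpha = { {x,y} in E : x in V_alpha, y in V \ A_alpha } *)
Definition E_al {V : Type} {O : Type} (E : V -> V -> Prop) (f : V -> Type)
  (A : O -> V -> Prop) (a : O) (u v : Vt_al f A a) : Prop :=
  E (proj1_sig u) (proj1_sig v) /\
  ((V_al f A a (proj1_sig u) /\ ~ A a (proj1_sig v)) \/
   (V_al f A a (proj1_sig v) /\ ~ A a (proj1_sig u))).

Definition f_al {V : Type} {O : Type} (f : V -> Type) (A : O -> V -> Prop) (a : O)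
  (u : Vt_al f A a) : Type := f (proj1_sig u).

Definition is_P_destruction (P : property) (V : Type) (E : V -> V -> Prop) (f : V -> Type)
  (O : Type) (lt : O -> O -> Prop) (A : O -> V -> Prop) : Prop :=
  destruction_seq V O lt A /\
  stationary lt (fun a => ~ fulfills P (Vt_al f A a) (E_al E f A a) (f_al f A a)).

Definition P_destructed (P : property) (V : Type) (E : V -> V -> Prop) (f : V -> Type)
  (O : Type) (lt : O -> O -> Prop) : Prop :=
  exists A, is_P_destruction P V E f O lt A.

(* Let F be a perfect f-factor of G.  Call a stage alpha closed when the F-neighbours of
   every vertex of A_alpha of degree < kappa^+ already lie in A_alpha.  Since kappa^+ is
   regular, every stage can be closed off at a later stage, and closedness passes to
   limits by continuity, so the closed stages form a club.  At a closed stage the edges of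
   F meeting V \ A_alpha form a perfect f_alpha-factor of G_alpha: vertices outside
   A_alpha keep all their F-edges, and a vertex of A_alpha surviving in V_alpha has degree
   kappa^+, of which fewer than kappa^+ are lost.  So P holds on a club and its failures
   are not stationary.  Regularity of kappa^+ comes from kappa * kappa = kappa for infinite
   kappa, which is obtained from Zorn's lemma. *)

From mathcomp Require Import ssreflect ssrbool classical_sets.
From mathcomp Require cardinality.
From Stdlib Require Import Classical ClassicalEpsilon ProofIrrelevance Cantor.

Local Open Scope classical_set_scope.

(** * Cardinal comparison *)

Lemma proj1_sig_inj (T : Type) (P : T -> Prop) (u v : {x | P x}) :
  proj1_sig u = proj1_sig v -> u = v.
Proof. by apply: eq_sig_hprop => x; apply: proof_irrelevance. Qed.

Lemma card_le_refl A : card_le A A.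
Proof. by exists id. Qed.

Lemma card_le_trans {A B C : Type} : card_le A B -> card_le B C -> card_le A C.
Proof. by move=> [f f_inj] [g g_inj]; exists (fun a => g (f a)) => a a' /g_inj /f_inj. Qed.

Lemma card_le_sig {T : Type} (P : T -> Prop) : card_le {x | P x} T.
Proof. exists (@proj1_sig _ _); exact: proj1_sig_inj. Qed.

Lemma card_le_prod {A A' B B' : Type} : card_le A A' -> card_le B B' -> card_le (A * B) (A' * B').
Proof.
  move=> [f f_inj] [g g_inj]; exists (fun p => (f (fst p), g (snd p))).
  by move=> [a b] [a' b'] [/f_inj -> /g_inj ->].
Qed.

Lemma card_le_of_rel X Y (R : X -> Y -> Prop) :
  (forall x, exists y, R x y) -> (forall x x' y, R x y -> R x' y -> x = x') -> card_le X Y.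
Proof.
  move=> R_total R_inj.
  exists (fun x => proj1_sig (constructive_indefinite_description _ (R_total x))) => x x'.
  do 2 case: constructive_indefinite_description => /=.
  by move=> y' Ry' y Ry eq_yy'; apply: R_inj Ry _; rewrite eq_yy'.
Qed.

Lemma card_le_image {A T : Type} (f : A -> T) : card_le {x | exists a, f a = x} A.
Proof.
  apply: (@card_le_of_rel _ _ (fun x a => f a = proj1_sig x)) => [[x [a fa]]|x x' a fx fx'].
  - by exists a.
  - by apply: proj1_sig_inj; rewrite -fx -fx'.
Qed.

Lemma card_eq_le {A B : Type} : card_eq A B -> card_le A B.
Proof. by move=> [f [f_inj _]]; exists f. Qed.

Lemma card_eq_ge {A B : Type} : card_eq A B -> card_le B A.
Proof.
  move=> [f [_ f_surj]]; apply: (@card_le_of_rel _ _ (fun b a => f a = b)) => //.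
  by move=> b b' a <- <-.
Qed.

Lemma card_eq_trans {A B C : Type} : card_eq A B -> card_eq B C -> card_eq A C.
Proof.
  move=> [f [f_inj f_surj]] [g [g_inj g_surj]]; exists (fun a => g (f a)); split.
  - by move=> a a' /g_inj /f_inj.
  - by move=> c; have [b <-] := g_surj c; have [a <-] := f_surj b; exists a.
Qed.

Lemma card_le_setT A B : card_le A B -> cardinality.card_le [set: A] [set: B].
Proof.
  move=> [g g_inj]; apply: (cardinality.card_le_trans _ (cardinality.card_leT (g @` [set: A]))).
  have := @cardinality.inj_card_eq _ _ [set: A] g (fun a a' _ _ => g_inj a a').
  by rewrite cardinality.card_eq_sym cardinality.card_eq_le => /andP[].
Qed.

Lemma card_eq_of_setT A B : cardinality.card_eq [set: A] [set: B] -> card_eq A B.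
Proof.
  move=> /cardinality.card_bijP [g [g' gK g'K]].
  have inT (T : Type) (t : T) : t \in [set: T] by exact: mem_set.
  exists (fun a => proj1_sig (g (exist _ a (inT _ a)))); split.
  - move=> a a' /proj1_sig_inj /(f_equal g').
    by rewrite !gK => -[].
  - move=> b; exists (proj1_sig (g' (exist _ b (inT _ b)))).
    case E: (g' _) => [a a_in] /=.
    by rewrite (proof_irrelevance _ (inT _ a) a_in) -E g'K.
Qed.

Lemma card_le_antisym {A B : Type} : card_le A B -> card_le B A -> card_eq A B.
Proof.
  move=> /card_le_setT AB /card_le_setT BA.
  exact/card_eq_of_setT/cardinality.Cantor_Bernstein.
Qed.

Lemma card_eq_sym {A B : Type} : card_eq A B -> card_eq B A.
Proof. by move=> AB; apply: card_le_antisym; [apply: card_eq_ge | apply: card_eq_le]. Qed.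

Lemma card_le_total X Y : card_le X Y \/ card_le Y X.
Proof.
  pose partial_bij (R : set (X * Y)) :=
    (forall x y y', R (x, y) -> R (x, y') -> y = y') /\
    (forall x x' y, R (x, y) -> R (x', y) -> x = x').
  have [R [[R_fun R_inj] R_max]] : exists R, partial_bij R /\ forall R', R `<` R' -> ~ partial_bij R'.
  { apply: Zorn_bigcup => F F_bij F_chain; split.
    - move=> x y y' [R1 FR1 r1] [R2 FR2 r2].
      case: (F_chain _ _ FR1 FR2) => [sub|sub].
      + exact: (proj1 (F_bij _ FR2) x y y' (sub _ r1) r2).
      + exact: (proj1 (F_bij _ FR1) x y y' r1 (sub _ r2)).
    - move=> x x' y [R1 FR1 r1] [R2 FR2 r2].
      case: (F_chain _ _ FR1 FR2) => [sub|sub].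
      + exact: (proj2 (F_bij _ FR2) x x' y (sub _ r1) r2).
      + exact: (proj2 (F_bij _ FR1) x x' y r1 (sub _ r2)). }
  have [X_full|X_part] := classic (forall x, exists y, R (x, y)).
  { by left; apply: (@card_le_of_rel _ _ (fun x y => R (x, y))). }
  have [Y_full|Y_part] := classic (forall y, exists x, R (x, y)).
  { right; apply: (@card_le_of_rel _ _ (fun y x => R (x, y))) => //.
    by move=> y y' x; apply: R_fun. }
  have [x0 /(not_ex_all_not _ _) x0_free] := not_all_ex_not _ _ X_part.
  have [y0 /(not_ex_all_not _ _) y0_free] := not_all_ex_not _ _ Y_part.
  exfalso; apply: (R_max (R `|` [set (x0, y0)])); first split.
  - by move=> p Rp; left.
  - by move=> /(_ (x0, y0) (or_intror eq_refl)) /x0_free.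
  - split.
    + move=> x y y' [Rxy|[? ?]] [Rxy'|[? ?]]; subst => //.
      * exact: R_fun Rxy Rxy'.
      * by case: (x0_free _ Rxy).
      * by case: (x0_free _ Rxy').
    + move=> x x' y [Rxy|[? ?]] [Rx'y|[? ?]]; subst => //.
      * exact: R_inj Rxy Rx'y.
      * by case: (y0_free _ Rxy).
      * by case: (y0_free _ Rx'y).
Qed.

Lemma card_le_or_sig {T : Type} {P Q : T -> Prop} :
  card_le {x | Q x} {x | P x} -> card_le {x | P x \/ Q x} ({x | P x} * bool).
Proof.
  move=> [h h_inj].
  have Q_of (u : {x | P x \/ Q x}) : ~ P (proj1_sig u) -> Q (proj1_sig u).
    by case: u => /= x [].
  exists (fun u => match excluded_middle_informative (P (proj1_sig u)) with
                  | left Pu => (exist _ _ Pu, true)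
                  | right nPu => (h (exist _ _ (Q_of u nPu)), false) end).
  move=> u v; case: excluded_middle_informative => Pu; case: excluded_middle_informative => Pv //= [].
  - exact: proj1_sig_inj.
  - by move=> /h_inj [] /proj1_sig_inj.
Qed.

(** * Hessenberg's theorem *)

Section Hessenberg.
Variables (K : Type) (e : nat -> K).
Hypothesis e_inj : forall m n, e m = e n -> m = n.

(* A pair of a subset [carrier S] of [K] and a relation [pairs S] is coded as one set [S],
   so that Zorn's lemma can be applied to codes ordered by inclusion. *)
Local Notation code := (set (K + (K * K) * K)).

Definition carrier (S : code) (k : K) : Prop := S (inl k).
Definition pairs (S : code) (p : K * K) (c : K) : Prop := S (inr (p, c)).

Definition is_pairing (S : code) : Prop :=
  [/\ forall p c c', pairs S p c -> pairs S p c' -> c = c',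
      forall p p' c, pairs S p c -> pairs S p' c -> p = p',
      forall a b, (exists c, pairs S (a, b) c) <-> carrier S a /\ carrier S b,
      forall p c, pairs S p c -> carrier S c &
      forall n, carrier S (e n)].

(* The empty code is admitted so that the union of the empty chain is admissible. *)
Definition admissible (S : code) : Prop := (forall t, ~ S t) \/ is_pairing S.

Lemma admissible_bigcup (F : set code) :
  F `<=` admissible -> total_on F subset -> admissible (\bigcup_(S in F) S).
Proof.
  move=> F_adm F_chain.
  have pairing_of S t : F S -> S t -> is_pairing S.
    by move=> FS St; case: (F_adm _ FS) => // /(_ t).
  have common S1 S2 t1 t2 : F S1 -> S1 t1 -> F S2 -> S2 t2 ->
      exists2 S, F S & [/\ S t1, S t2 & is_pairing S].
  { move=> FS1 S1t1 FS2 S2t2; case: (F_chain _ _ FS1 FS2) => sub.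
    - by exists S2 => //; split => //; [exact: sub | exact: pairing_of FS2 S2t2].
    - by exists S1 => //; split => //; [exact: sub | exact: pairing_of FS1 S1t1]. }
  have [[t0 [S0 FS0 S0t0]]|empty] := classic (exists t, (\bigcup_(S in F) S) t); last first.
    by left => t Ut; apply: empty; exists t.
  right; split.
  - move=> p c c' [S1 FS1 h1] [S2 FS2 h2].
    by have [S FS [h1' h2' [S_fun _ _ _ _]]] := common _ _ _ _ FS1 h1 FS2 h2; apply: S_fun h1' h2'.
  - move=> p p' c [S1 FS1 h1] [S2 FS2 h2].
    by have [S FS [h1' h2' [_ S_inj _ _ _]]] := common _ _ _ _ FS1 h1 FS2 h2; apply: S_inj h1' h2'.
  - move=> a b; split.
    + move=> [c [S1 FS1 h1]].
      have [_ _ S_dom _ _] := pairing_of _ _ FS1 h1.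
      by have [ha hb] := proj1 (S_dom a b) (ex_intro _ c h1); split; exists S1.
    + move=> [[S1 FS1 ha] [S2 FS2 hb]].
      have [S FS [ha' hb' [_ _ S_dom _ _]]] := common _ _ _ _ FS1 ha FS2 hb.
      have [c hc] := proj2 (S_dom a b) (conj ha' hb').
      by exists c; exists S.
  - move=> p c [S1 FS1 h1].
    by have [_ _ _ S_cod _] := pairing_of _ _ FS1 h1; exists S1 => //; apply: S_cod h1.
  - by move=> n; have [_ _ _ _ S_nat] := pairing_of _ _ FS0 S0t0; exists S0 => //; apply: S_nat.
Qed.

Definition nat_code : code := fun t =>
  match t with
  | inl k => exists n, e n = k
  | inr ((a, b), c) => exists i j, [/\ a = e i, b = e j & c = e (to_nat (i, j))]
  end.

Lemma nat_code_pairing : is_pairing nat_code.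
Proof.
  split; rewrite /pairs /carrier /nat_code.
  - by move=> [a b] c c' [i [j [-> -> ->]]] [i' [j' [/e_inj <- /e_inj <- ->]]].
  - move=> [a b] [a' b'] c [i [j [-> -> ->]]] [i' [j' [-> -> /e_inj]]].
    by move=> /(f_equal of_nat); rewrite !cancel_of_to => -[-> ->].
  - move=> a b; split.
    + by move=> [c [i [j [-> -> _]]]]; split; [exists i | exists j].
    + by move=> [[i <-] [j <-]]; exists (e (to_nat (i, j))), i, j.
  - by move=> [a b] c [i [j [_ _ ->]]]; exists (to_nat (i, j)).
  - by move=> n; exists n.
Qed.

Section Maximal.
Variable M : code.
Hypotheses (M_pairing : is_pairing M) (M_max : forall S, M `<` S -> ~ admissible S).
Local Notation B := {k | carrier M k}.

Lemma card_le_carrier_sq : card_le (B * B) B.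
Proof.
  have [M_fun M_inj M_dom M_cod _] := M_pairing.
  pose R (p : B * B) (c : B) := pairs M (proj1_sig (fst p), proj1_sig (snd p)) (proj1_sig c).
  apply: (@card_le_of_rel _ _ R).
  - move=> [[a Ba] [b Bb]]; have [c Mc] := proj2 (M_dom a b) (conj Ba Bb).
    by exists (exist _ c (M_cod _ _ Mc)).
  - move=> [[a Ba] [b Bb]] [[a' Ba'] [b' Bb']] [c Bc] /M_inj /[apply] -[Ea Eb].
    by subst a' b'; rewrite (proof_irrelevance _ Ba Ba') (proof_irrelevance _ Bb Bb').
Qed.

Lemma card_le_carrier_bool : card_le (B * bool) B.
Proof.
  have [_ _ _ _ M_nat] := M_pairing.
  apply: (card_le_trans _ card_le_carrier_sq); apply: card_le_prod; first exact: card_le_refl.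
  exists (fun b : bool => exist _ (e (if b then 0 else 1)) (M_nat _)).
  by move=> [] [] // [/e_inj].
Qed.

(* If [j] embeds the carrier [B] into its complement, the pairing extends to [B] together
   with the image [C] of [j]: the new pairs, those of [(B + C)^2 \ B^2], number at most
   [|B| = |C|] and are sent injectively into [C]. *)
Section Extension.
Variable j : B -> {k | ~ carrier M k}.
Hypothesis j_inj : forall b b', j b = j b' -> b = b'.

Definition image_j (k : K) : Prop := exists b, proj1_sig (j b) = k.
Definition carrier_ext (k : K) : Prop := carrier M k \/ image_j k.
Definition fresh (p : K * K) : Prop :=
  [/\ carrier_ext (fst p), carrier_ext (snd p) & ~ (carrier M (fst p) /\ carrier M (snd p))].

Lemma card_le_fresh : card_le {p | fresh p} B.
Proof.
  have ext_le : card_le {k | carrier_ext k} B.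
  { apply: (card_le_trans (card_le_or_sig _)); last exact: card_le_carrier_bool.
    exact: card_le_image (fun b => proj1_sig (j b)). }
  apply: (card_le_trans (B := ({k | carrier_ext k} * {k | carrier_ext k})%type)).
  - exists (fun p => let: exist (a, b) (And3 Ea Eb _) := p in (exist _ a Ea, exist _ b Eb)).
    move=> [[a b] [? ? ?]] [[a' b'] [? ? ?]] [Ea Eb].
    by apply: proj1_sig_inj; rewrite /= Ea Eb.
  - exact: card_le_trans (card_le_prod ext_le ext_le) card_le_carrier_sq.
Qed.

Variable g : {p | fresh p} -> B.
Hypothesis g_inj : forall p p', g p = g p' -> p = p'.

Definition extended_code : code := fun t =>
  match t with
  | inl k => carrier_ext k
  | inr (p, c) => pairs M p c \/ exists h : fresh p, c = proj1_sig (j (g (exist _ p h)))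
  end.

Lemma extended_code_pairing : is_pairing extended_code.
Proof.
  have [M_fun M_inj M_dom M_cod M_nat] := M_pairing.
  have M_not_fresh p c : pairs M p c -> ~ fresh p.
    by case: p => a b Mc [_ _]; apply; apply: (proj1 (M_dom a b)); exists c.
  have j_out b : ~ carrier M (proj1_sig (j b)) := proj2_sig (j b).
  split; rewrite /pairs /carrier /=.
  - move=> p c c' [Mc|[h ->]] [Mc'|[h' ->]].
    + exact: M_fun Mc Mc'.
    + by case: (M_not_fresh _ _ Mc h').
    + by case: (M_not_fresh _ _ Mc' h).
    + by rewrite (proof_irrelevance _ h h').
  - move=> p p' c [Mc|[h ->]] [Mc'|[h' E]].
    + exact: M_inj Mc Mc'.
    + by case: (j_out (g (exist _ p' h'))); rewrite -E; apply: M_cod Mc.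
    + by case: (j_out (g (exist _ p h))); apply: M_cod Mc'.
    + by move: E => /proj1_sig_inj /j_inj /g_inj [].
  - move=> a b; split.
    + move=> [c [Mc|[[Ea Eb _] _]]]; last by split.
      by have [Ma Mb] := proj1 (M_dom a b) (ex_intro _ c Mc); split; left.
    + move=> [Ea Eb]; have [[Ma Mb]|not_M] := classic (carrier M a /\ carrier M b).
      * by have [c Mc] := proj2 (M_dom a b) (conj Ma Mb); exists c; left.
      * have h : fresh (a, b) by split.
        by exists (proj1_sig (j (g (exist _ _ h)))); right; exists h.
  - move=> p c [Mc|[h ->]]; first by left; apply: M_cod Mc.
    by right; exists (g (exist _ p h)).
  - by move=> n; left.
Qed.

Lemma extended_code_proper : M `<` extended_code.
Proof.
  have [_ _ _ _ M_nat] := M_pairing.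
  split; first by move=> [k|[p c]] Mt; left.
  pose b0 : B := exist _ (e 0) (M_nat 0).
  move=> /(_ (inl (proj1_sig (j b0)))) sub.
  by apply: (proj2_sig (j b0)); apply: sub; right; exists b0.
Qed.

End Extension.

Lemma not_card_le_carrier_compl : ~ card_le B {k | ~ carrier M k}.
Proof.
  move=> [j j_inj]; have [g g_inj] := card_le_fresh j.
  exact: M_max _ (extended_code_proper j g) (or_intror (extended_code_pairing j j_inj g g_inj)).
Qed.

Lemma card_le_carrier : card_le K B.
Proof.
  have [compl_le|/not_card_le_carrier_compl //] := card_le_total {k | ~ carrier M k} B.
  apply: card_le_trans card_le_carrier_bool.
  apply: card_le_trans (card_le_or_sig compl_le).
  by exists (fun k => exist _ k (classic (carrier M k))) => k k' [].
Qed.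

End Maximal.

Lemma card_le_square_of_nat_inj : card_le (K * K) K.
Proof.
  have [M [M_adm M_max]] := @Zorn_bigcup _ admissible admissible_bigcup.
  case: M_adm => [M_empty|M_pairing].
  - exfalso; apply: (M_max nat_code); last by right; exact: nat_code_pairing.
    split; first by move=> t /M_empty.
    by move=> /(_ (inl (e 0))) sub; apply: (M_empty (inl (e 0))); apply: sub; exists 0.
  - have K_le_B := card_le_carrier _ M_pairing M_max.
    apply: card_le_trans (card_le_prod K_le_B K_le_B) _.
    exact: card_le_trans (card_le_carrier_sq _ M_pairing) (card_le_sig _).
Qed.

End Hessenberg.

Lemma card_le_square {K : Type} : card_le nat K -> card_le (K * K) K.
Proof. by move=> [e e_inj]; apply: card_le_square_of_nat_inj e_inj. Qed.

Lemma card_le_option {K : Type} : card_le nat K -> card_le (option K) K.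
Proof.
  move=> K_inf; have [e e_inj] := K_inf.
  apply: card_le_trans (card_le_square K_inf).
  exists (fun o => if o is Some k then (k, e 1) else (e 0, e 0)).
  move=> [k|] [k'|] // [] => [-> // | _ /e_inj // | _ /e_inj //].
Qed.

Lemma in_C_of_perfect_factor (V : Type) (E F : V -> V -> Prop) (f : V -> Type) :
  is_graph V E -> perfect_factor V E f F -> in_C V E f.
Proof.
  move=> G [F_sub [_ F_deg]]; split=> // x.
  apply: card_le_trans (card_eq_ge (F_deg x)) _.
  exists (fun p => exist _ (proj1_sig p) (F_sub _ _ (proj2_sig p))).
  by move=> p p' [] /proj1_sig_inj.
Qed.

(** * Regularity of successor cardinals *)

Section SuccessorCardinal.
Context {K O : Type} {lt : O -> O -> Prop}.
Hypothesis HO : is_succ_card K O lt.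

Let K_inf : card_le nat K. Proof. by case: HO. Qed.
Let lt_wf : well_founded lt. Proof. by case: HO => _ []. Qed.
Let lt_trans : forall a b c, lt a b -> lt b c -> lt a c. Proof. by case: HO => _ [_ []]. Qed.
Let lt_total : forall a b, lt a b \/ a = b \/ lt b a. Proof. by case: HO => _ [_ [_ []]]. Qed.
Let segment_small : forall a, card_le {b | lt b a} K. Proof. by case: HO => _ [_ [_ [_ []]]]. Qed.
Let O_large : ~ card_le O K. Proof. by case: HO => _ [_ [_ [_ []]]]. Qed.

Lemma lt_irrefl a : ~ lt a a.
Proof. by elim/(well_founded_ind lt_wf): a => x IH xx; exact: (IH x xx xx). Qed.

Lemma eq_of_not_lt {a b} : ~ lt a b -> ~ lt b a -> a = b.
Proof. by case: (lt_total a b) => [|[|]]. Qed.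

Lemma exists_le_both a b : exists c, (lt a c \/ a = c) /\ (lt b c \/ b = c).
Proof.
  case: (lt_total a b) => [ab|[<-|ba]]; first by exists b; split; [left|right].
  - by exists a; split; right.
  - by exists a; split; [right|left].
Qed.

Lemma exists_least (P : O -> Prop) a : P a -> exists m, P m /\ forall b, P b -> ~ lt b m.
Proof.
  move=> Pa; apply: NNPP => no_least.
  suff : forall x, ~ P x by move/(_ a).
  elim/(well_founded_ind lt_wf) => x IH Px.
  by apply: no_least; exists x; split=> // b Pb /IH.
Qed.

(* [b] is coded by an index [i] with [b <= g i] together with the position of [b]
   below [g i] (or [None] when [b = g i]). *)
Lemma card_le_cofinal {I : Type} {g : I -> O} :
  (forall b, exists i, ~ lt (g i) b) -> card_le O (I * option K).
Proof.
  move=> cofinal.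
  have seg_inj a : {s : {b | lt b a} -> K | forall u v, s u = s v -> u = v}.
    by apply: constructive_indefinite_description; apply: segment_small.
  pose idx b := proj1_sig (constructive_indefinite_description _ (cofinal b)).
  have idx_ge b : ~ lt (g (idx b)) b := proj2_sig (constructive_indefinite_description _ (cofinal b)).
  pose code i b := match excluded_middle_informative (lt b (g i)) with
                   | left h => Some (proj1_sig (seg_inj _) (exist _ b h))
                   | right _ => None end.
  exists (fun b => (idx b, code (idx b) b)) => b c [E].
  have := idx_ge b; have := idx_ge c; rewrite E; move: (idx c) => i ci bi.
  rewrite /code; case: excluded_middle_informative => bl; case: excluded_middle_informative => cl //.
  - by move=> [] /(proj2_sig (seg_inj _)) [].
  - by move=> _; rewrite (eq_of_not_lt bl bi) (eq_of_not_lt cl ci).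
Qed.

Lemma bounded_of_small {I : Type} : ~ card_le O I -> forall g : I -> O, exists b, forall i, lt (g i) b.
Proof.
  move=> O_not_le_I g; apply: NNPP => unbounded.
  have cofinal b : exists i, ~ lt (g i) b.
    apply: NNPP => all_lt; apply: unbounded; exists b => i.
    by apply: NNPP => not_lt; apply: all_lt; exists i.
  have O_le := card_le_cofinal cofinal.
  case: (card_le_total I K) => [I_le_K|K_le_I].
  - apply: O_large; apply: card_le_trans O_le _.
    apply: card_le_trans (card_le_square K_inf).
    exact: card_le_prod I_le_K (card_le_option K_inf).
  - apply: O_not_le_I; apply: card_le_trans O_le _.
    apply: card_le_trans (card_le_square (card_le_trans K_inf K_le_I)).
    exact: card_le_prod (card_le_refl I) (card_le_trans (card_le_option K_inf) K_le_I).
Qed.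

Lemma not_card_le_nat : ~ card_le O nat.
Proof. by move=> O_le; apply: O_large; apply: card_le_trans O_le K_inf. Qed.

Lemma card_le_tail b : card_le O {c | ~ lt c b}.
Proof.
  apply: NNPP => /bounded_of_small /(_ (@proj1_sig _ _)) [b' above].
  have [b'b|not_b'b] := classic (lt b' b).
  - by apply: (lt_irrefl b); apply: lt_trans (above (exist _ b (lt_irrefl b))) b'b.
  - exact: lt_irrefl (above (exist _ b' not_b'b)).
Qed.

Lemma card_le_compl {D : Type} {Q : D -> Prop} :
  card_eq D O -> ~ card_le O {d | Q d} -> card_le O {d | ~ Q d}.
Proof.
  move=> /card_eq_sym [phi [phi_inj phi_surj]] Q_small.
  pose pre (d : {d | Q d}) := proj1_sig (constructive_indefinite_description _ (phi_surj (proj1_sig d))).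
  have [b above] := bounded_of_small Q_small pre.
  have out (t : {c | ~ lt c b}) : ~ Q (phi (proj1_sig t)).
  { case: t => c c_ge /= Qc; apply: c_ge.
    have := above (exist _ _ Qc); rewrite /pre.
    by case: constructive_indefinite_description => o /= /phi_inj ->. }
  apply: card_le_trans (card_le_tail b) _.
  by exists (fun t => exist (fun d => ~ Q d) _ (out t)) => t t' [] /phi_inj /proj1_sig_inj.
Qed.

(** * Closed stages of a destruction *)

Section Destruction.
Context {V : Type} {E F : V -> V -> Prop} {f : V -> Type} {A : O -> V -> Prop}.
Hypotheses (HC : in_C V E f) (HV : card_eq V O) (HF : perfect_factor V E f F)
  (HA : destruction_seq V O lt A).

Let F_sub : forall x y, F x y -> E x y. Proof. by case: HF. Qed.
Let F_sym : forall x y, F x y -> F y x. Proof. by case: HF => _ []. Qed.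
Let F_deg : forall x, card_eq (deg F x) (f x). Proof. by case: HF => _ []. Qed.
Let A_mono : forall a b, lt a b -> forall x, A a x -> A b x. Proof. by case: HA. Qed.
Let A_cont : forall l, is_limit lt l -> forall x, A l x <-> exists a, lt a l /\ A a x.
Proof. by case: HA => _ []. Qed.
Let A_small : forall a, ~ card_le O {x | A a x}. Proof. by move=> a; case: HA => _ [_ [/(_ a) []]]. Qed.
Let A_cover : forall x, exists a, A a x. Proof. by case: HA => _ [_ []]. Qed.

Lemma A_mono_le {a b x} : lt a b \/ a = b -> A a x -> A b x.
Proof. by case=> [ab|<-] //; exact: A_mono _ _ ab x. Qed.

Lemma deg_factor_small {x} : ~ card_eq (f x) O -> ~ card_le O (deg F x).
Proof.
  move=> f_small O_le; apply: f_small; apply: card_le_antisym.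
  - case: HC => _ /(_ x) /card_le_trans; apply.
    exact: card_le_trans (card_le_sig _) (card_eq_le HV).
  - exact: card_le_trans O_le (card_eq_le (F_deg x)).
Qed.

Definition closes_into (a b : O) : Prop :=
  forall x y, A a x -> ~ card_eq (f x) O -> F x y -> A b y.

Definition closed_stage (a : O) : Prop := closes_into a a.

Lemma closure_step a : exists b, (lt a b \/ a = b) /\ closes_into a b.
Proof.
  pose stage y := proj1_sig (constructive_indefinite_description _ (A_cover y)).
  have A_stage y : A (stage y) y := proj2_sig (constructive_indefinite_description _ (A_cover y)).
  have nbr_bound (x : {x | A a x}) : exists c,
      ~ card_eq (f (proj1_sig x)) O -> forall y, F (proj1_sig x) y -> lt (stage y) c.
  { case: x => x _ /=; have [large|f_small] := classic (card_eq (f x) O).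
      by exists a => /(_ large).
    have [c above] := bounded_of_small (deg_factor_small f_small) (fun y => stage (proj1_sig y)).
    by exists c => _ y Fxy; apply: (above (exist _ y Fxy)). }
  pose bound x := proj1_sig (constructive_indefinite_description _ (nbr_bound x)).
  have [c above] := bounded_of_small (A_small a) bound.
  have [b [ab cb]] := exists_le_both a c.
  exists b; split=> // x y Ax f_small Fxy.
  apply: A_mono_le cb _; apply: A_mono _ _ _ _ (A_stage y).
  apply: lt_trans (above (exist _ x Ax)).
  by rewrite /bound; case: constructive_indefinite_description => /= d; apply.
Qed.

Definition next_stage (a : O) : O :=
  proj1_sig (constructive_indefinite_description _ (closure_step a)).

Lemma next_stage_spec a : (lt a (next_stage a) \/ a = next_stage a) /\
  closes_into a (next_stage a).
Proof. exact: proj2_sig (constructive_indefinite_description _ (closure_step a)). Qed.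

(* The supremum of the iterates of [next_stage] is closed: a vertex of [A l] already lies
   in some iterate, either because the iteration reaches [l] or by continuity at [l]. *)
Lemma closed_stage_above a0 : exists l, closed_stage l /\ (lt a0 l \/ a0 = l).
Proof.
  pose u := fix u n := if n is S n then next_stage (u n) else a0.
  have [b above] := bounded_of_small not_card_le_nat u.
  have [l [u_le_l l_least]] :=
    exists_least (fun c => forall n, lt (u n) c \/ u n = c) b (fun n => or_introl (above n)).
  have below c : lt c l -> exists n, lt c (u n).
  { move=> cl; apply: NNPP => none; apply: (l_least c) => // n.
    case: (lt_total (u n) c) => [|[|cu]]; [by left | by right | by case: none; exists n]. }
  exists l; split; last exact: u_le_l 0.
  move=> x y Alx f_small Fxy.
  suff [n Aux] : exists n, A (u n) x.
    exact: A_mono_le (u_le_l (S n)) (proj2 (next_stage_spec (u n)) x y Aux f_small Fxy).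
  have [[n un]|never] := classic (exists n, u n = l); first by exists n; rewrite un.
  have u_lt n : lt (u n) l by case: (u_le_l n) => // un; case: never; exists n.
  have l_limit : is_limit lt l.
    by split; [exists (u 0) | move=> c /below [n cu]; exists (u n)].
  have [c [cl Acx]] := proj1 (A_cont _ l_limit x) Alx.
  have [n cu] := below c cl.
  by exists n; apply: A_mono _ _ cu _ Acx.
Qed.

Lemma closed_stage_limit l : is_limit lt l ->
  (forall a, lt a l -> exists b, closed_stage b /\ (lt a b \/ a = b) /\ lt b l) ->
  closed_stage l.
Proof.
  move=> l_limit cofinal x y Alx f_small Fxy.
  have [c [cl Acx]] := proj1 (A_cont _ l_limit x) Alx.
  have [b [closed_b [cb bl]]] := cofinal c cl.
  exact: A_mono _ _ bl _ (closed_b x y (A_mono_le cb Acx) f_small Fxy).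
Qed.

Lemma closed_stage_club : club lt closed_stage.
Proof. exact: conj closed_stage_above closed_stage_limit. Qed.

Definition stage_factor (a : O) (u v : Vt_al f A a) : Prop :=
  F (proj1_sig u) (proj1_sig v) /\ (~ A a (proj1_sig u) \/ ~ A a (proj1_sig v)).

Lemma stage_is_graph a : is_graph (Vt_al f A a) (E_al E f A a).
Proof.
  have [[_ [E_sym E_irrefl]] _] := HC.
  split; [|split].
  - apply: NNPP => empty; apply: (A_small a).
    apply: card_le_trans (card_eq_ge HV) _.
    exists (fun x => exist _ x (NNPP _ (fun nAx => empty (inhabits (exist _ x (or_introl nAx)))))).
    by move=> x x' [].
  - by move=> u v [/E_sym Evu [] [? ?]]; split=> //; [right | left].
  - by move=> u [/E_irrefl].
Qed.

Lemma card_le_deg_stage_factor a u : card_le (deg (stage_factor a) u) (deg F (proj1_sig u)).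
Proof.
  exists (fun p => exist _ (proj1_sig (proj1_sig p)) (proj1 (proj2_sig p))).
  by move=> p p' [] /proj1_sig_inj /proj1_sig_inj.
Qed.

(* A vertex of [A a] left in the stage has degree [kappa^+], and fewer than [kappa^+]
   of its neighbours are removed. *)
Lemma deg_stage_factor_inside a x (Vx : V_al f A a x) :
  A a x -> card_le (deg F x) (deg (stage_factor a) (exist _ x Vx)).
Proof.
  move=> Ax; have x_large : card_eq (f x) O by case: Vx.
  have deg_O := card_eq_trans (F_deg x) x_large.
  have nbr_in_small : ~ card_le O {y : deg F x | A a (proj1_sig y)}.
  { move=> /card_le_trans O_le; apply: (A_small a); apply: O_le.
    exists (fun y : {y : deg F x | A a (proj1_sig y)} => exist (A a) _ (proj2_sig y)).
    by move=> y y' [] /proj1_sig_inj /proj1_sig_inj. }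
  apply: card_le_trans (card_eq_le deg_O) _.
  apply: card_le_trans (card_le_compl deg_O nbr_in_small) _.
  exists (fun y => let: exist (exist y Fxy) nAy := y in
    exist (fun v : Vt_al f A a => stage_factor a (exist _ x Vx) v)
      (exist _ y (or_introl nAy)) (conj Fxy (or_intror nAy))).
  by move=> [[y ?] ?] [[y' ?] ?] [] Eyy'; do 2 apply: proj1_sig_inj.
Qed.

Lemma deg_stage_factor_outside a x (Vx : V_al f A a x) : closed_stage a ->
  ~ A a x -> card_le (deg F x) (deg (stage_factor a) (exist _ x Vx)).
Proof.
  move=> closed_a nAx.
  have Vy (y : deg F x) : V_al f A a (proj1_sig y).
  { case: y => y /= Fxy; have [Ay|] := classic (A a y); last by left.
    right; apply: NNPP => f_small; exact: nAx (closed_a _ _ Ay f_small (F_sym _ _ Fxy)). }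
  exists (fun y => exist (fun v : Vt_al f A a => stage_factor a (exist _ x Vx) v)
    (exist _ _ (Vy y)) (conj (proj2_sig y) (or_introl nAx))).
  by move=> y y' [] /proj1_sig_inj.
Qed.

Lemma stage_perfect_factor a : closed_stage a ->
  perfect_factor (Vt_al f A a) (E_al E f A a) (f_al f A a) (stage_factor a).
Proof.
  move=> closed_a; split; [|split].
  - move=> u v [Fuv nA]; split; first exact: F_sub.
    by case: nA => nA; [right | left]; split=> //; apply: proj2_sig.
  - by move=> u v [/F_sym Fvu [] nA]; split=> //; [right | left].
  - move=> [x Vx]; apply: card_eq_trans (F_deg x).
    apply: card_le_antisym; first exact: card_le_deg_stage_factor.
    have [Ax|nAx] := classic (A a x).
    + exact: deg_stage_factor_inside.
    + exact: deg_stage_factor_outside.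
Qed.

Lemma stationary_meets_perfect_stage (S : O -> Prop) : stationary lt S ->
  exists a, S a /\ in_C (Vt_al f A a) (E_al E f A a) (f_al f A a) /\
    has_perfect_factor (Vt_al f A a) (E_al E f A a) (f_al f A a).
Proof.
  move=> /(_ _ closed_stage_club) [a [Sa closed_a]].
  have factor := stage_perfect_factor a closed_a.
  exists a; split=> //; split; last by exists (stage_factor a).
  exact: in_C_of_perfect_factor (stage_is_graph a) factor.
Qed.

End Destruction.
End SuccessorCardinal.

Theorem lemma4 (P : property)
  (Hnec : forall (V' : Type) (E' : V' -> V' -> Prop) (f' : V' -> Type),
      in_C V' E' f' -> has_perfect_factor V' E' f' -> P V' E' f')
  (K : Type) (O : Type) (lt : O -> O -> Prop) (HO : is_succ_card K O lt)
  (V : Type) (E : V -> V -> Prop) (f : V -> Type)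
  (HC : in_C V E f) (HV : card_eq V O)
  (Hf : has_perfect_factor V E f) :
  ~ P_destructed P V E f O lt.
Proof.
  move=> [A [HA A_stationary]]; have [F HF] := Hf.
  have [a [not_P [C_a factor_a]]] := stationary_meets_perfect_stage HO HC HV HF HA _ A_stationary.
  by apply: not_P; split=> //; apply: Hnec.
Qed.
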